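(* Assume $2\prod_{i=1}^{n-1}(1+q^i)\neq0$ in $K$, and let $\lambda\in\mathcal P_n$ with $\lambda=\widehat\lambda$. Then there is an $\mathcal H(D_{n-1})$-module isomorphism $$\mathrm{soc}\bigl(D_+^{\lambda}\!\downarrow_{\mathcal H(D_{n-1})}\bigr)\cong\mathrm{soc}\bigl(D_-^{\lambda}\!\downarrow_{\mathcal H(D_{n-1})}\bigr).$$
   Context: Let $K$ be a field, $q\in K^\times$, and assume $2\prod_{i=1}^{n-1}(1+q^i)\neq0$ in $K$. $\mathcal H(B_m)$ is the $K$-algebra with generators $T_0,\dots,T_{m-1}$ and relations $T_0^2=1$; $(T_i+1)(T_i-q)=0$ for $1\le i\le m-1$; $T_0T_1T_0T_1=T_1T_0T_1T_0$; $T_iT_{i+1}T_i=T_{i+1}T_iT_{i+1}$ for $1\le i\le m-2$; $T_iT_j=T_jT_i$ for $|i-j|>1$. $\mathcal H(D_m)$ is its subalgebra generated by $T_0T_1T_0,T_1,\dots,T_{m-1}$; $\mathcal H(D_{n-1})\subset\mathcal H(D_n)$ via generators of index $\le n-2$. For a bipartition $\lambda$, $\tilde D^\lambda$ is the simple head of the Dipper–James–Mathas Specht module, $\mathcal P_m=\{\lambda:\tilde D^\lambda\ne0\}$, and $\widehat\lambda=(\lambda^{(2)},\lambda^{(1)})$. Under the hypothesis $\mathcal H(D_n)$ is split and, for $\lambda\in\mathcal P_n$ with $\lambda=\widehat\lambda$, $\tilde D^\lambda\!\downarrow_{\mathcal H(D_n)}=D_+^\lambda\oplus D_-^\lambda$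 with $D_+^\lambda,D_-^\lambda$ non-isomorphic irreducible $\mathcal H(D_n)$-modules. *)

From HB Require Import structures.
From mathcomp Require Import all_boot all_order all_algebra.
Set Implicit Arguments. Unset Strict Implicit. Unset Printing Implicit Defensive.
Import GRing.Theory.
Local Open Scope ring_scope.

(* A (finite-dimensional, right) module over a Hecke algebra is represented by
   matrices acting on row vectors K^d; T i is the matrix of the generator T_i.
   Only the indices i < n are relevant. *)

Definition HB_rel (K : fieldType) (n d : nat) (q : K) (T : nat -> 'M[K]_d)
  : Prop :=
  [/\ (0 < n)%N -> T 0%N *m T 0%N = 1%:M,
      forall i, (1 <= i < n)%N -> (T i + 1%:M) *m (T i - q%:M) = 0,
      (1 < n)%N -> T 0%N *m T 1%N *m T 0%N *m T 1%N = T 1%N *m T 0%N *m T 1%N *m T 0%N,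
      forall i, (1 <= i)%N -> (i.+1 < n)%N ->
        T i *m T i.+1 *m T i = T i.+1 *m T i *m T i.+1 &
      forall i j, (i < n)%N -> (j < n)%N -> ((i.+1 < j) || (j.+1 < i))%N ->
        T i *m T j = T j *m T i].

Definition genB (K : fieldType) (d : nat) (n : nat) (T : nat -> 'M[K]_d)
  : seq 'M[K]_d := [seq T i | i <- iota 0 n].

(* generators of H(D_m) inside H(B_n) (m <= n): T_0 T_1 T_0 (when m >= 2) and
   T_1, ..., T_{m-1}.  In particular H(D_{n-1}) uses the generators of index
   <= n-2. *)
Definition genD (K : fieldType) (d : nat) (m : nat) (T : nat -> 'M[K]_d)
  : seq 'M[K]_d :=
  (if (1 < m)%N then [:: T 0%N *m T 1%N *m T 0%N] else [::])
  ++ [seq T i | i <- iota 1 m.-1].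

Definition stable (K : fieldType) (d : nat) (gs : seq 'M[K]_d) (U : 'M[K]_d)
  : bool := all (fun A => (U *m A <= U)%MS) gs.

Definition simple_sub (K : fieldType) (d : nat) (gs : seq 'M[K]_d) (U : 'M[K]_d)
  : Prop :=
  [/\ U != 0, stable gs U &
      forall V : 'M[K]_d, stable gs V -> (V <= U)%MS -> V = 0 \/ (U <= V)%MS].

Definition mod_iso (K : fieldType) (d : nat) (gs : seq 'M[K]_d) (U V : 'M[K]_d)
  : Prop :=
  exists f : 'M[K]_d,
    [/\ \rank (U *m f) = \rank U, (U *m f == V)%MS &
        all (fun A => U *m A *m f == U *m f *m A) gs].

Definition is_socle (K : fieldType) (d : nat) (gs : seq 'M[K]_d) (U S : 'M[K]_d)
  : Prop :=
  [/\ stable gs S, (S <= U)%MS,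
      (forall W : 'M[K]_d, simple_sub gs W -> (W <= U)%MS -> (W <= S)%MS) &
      exists k (Ws : 'I_k -> 'M[K]_d),
        (forall i, simple_sub gs (Ws i)) /\ (S == \sum_(i < k) Ws i)%MS].

From HB Require Import structures.
From mathcomp Require Import all_boot all_order all_algebra zify.
From Stdlib Require Import Classical.
Set Implicit Arguments. Unset Strict Implicit. Unset Printing Implicit Defensive.
Import GRing.Theory.
Local Open Scope ring_scope.

(* Conjugation by T_0 normalises H(D_n), so D_+ T_0 is again a simple
   H(D_n)-submodule.  It cannot meet D_+, for then D_+ would be an
   H(B_n)-submodule; and if it met D_- trivially, the projections along D_-
   and along D_+ would identify it with both D_+ and D_-.  Hence
   D_+ T_0 = D_-, and then D_+ L = D_- for L = T_(n-1)...T_1 T_0 T_1...T_(n-1).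
   As L is invertible and centralises H(D_(n-1)), right multiplication by L is
   an H(D_(n-1))-isomorphism D_+ -> D_-, which maps the socle of D_+ onto
   the socle of D_-. *)

Section Submodules.
Variables (K : fieldType) (d : nat) (gs : seq 'M[K]_d).
Implicit Types (U V W S f : 'M[K]_d).

Lemma stable_cap U V : stable gs U -> stable gs V -> stable gs (U :&: V)%MS.
Proof.
move=> /allP sU /allP sV; apply/allP => A hA; rewrite sub_capmx.
by rewrite (submx_trans _ (sU A hA)) ?(submx_trans _ (sV A hA)) ?submxMr ?capmxSl ?capmxSr.
Qed.

Lemma stable_eqmx U V : (U :=: V)%MS -> stable gs U = stable gs V.
Proof. by move=> eUV; apply: eq_all => A; apply: eqmx_stable. Qed.

Definition centralizes f := forall A, A \in gs -> A *m f = f *m A.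

Lemma centralizes_inv f : f \in unitmx -> centralizes f -> centralizes (invmx f).
Proof.
move=> uf cf A hA; apply: (canRL (mulKmx uf)).
by rewrite mulmxA -cf // -mulmxA mulmxV // mulmx1.
Qed.

Lemma stableMr f V : centralizes f -> stable gs V -> stable gs (V *m f).
Proof.
move=> cf /allP sV; apply/allP => A hA.
by rewrite -mulmxA -cf // mulmxA submxMr ?sV.
Qed.

Lemma simple_subMr f W : f \in unitmx -> centralizes f ->
  simple_sub gs W -> simple_sub gs (W *m f).
Proof.
move=> uf cf [nzW sW minW]; split; first by rewrite mulmx_free_eq0 ?row_free_unit.
  exact: stableMr.
move=> V sV VWf.
have := minW (V *m invmx f) (stableMr (centralizes_inv uf cf) sV).
rewrite -(mulmxK uf W) submxMr // => /(_ isT) [V0|WV].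
  by left; rewrite -(mulmxKV uf V) V0 mul0mx.
by right; rewrite -(mulmxKV uf V) submxMr.
Qed.

Definition sum_of_simples S := exists k (Ws : 'I_k -> 'M[K]_d),
  (forall i, simple_sub gs (Ws i)) /\ (S == \sum_(i < k) Ws i)%MS.

Lemma sum_of_simples0 : sum_of_simples 0.
Proof.
exists 0%N, (fun _ => 0); split; first by case.
by rewrite big_ord0 submx_refl.
Qed.

Lemma sum_of_simples_adds S W :
  sum_of_simples S -> simple_sub gs W -> sum_of_simples (S + W)%MS.
Proof.
move=> [k [Ws [simWs /eqmxP defS]]] simW.
exists k.+1, (fun i => if unlift ord0 i is Some j then Ws j else W); split.
  by move=> i; case: (unlift ord0 i).
rewrite big_ord_recl unlift_none addsmxC (eq_bigr Ws) => [|i _]; last first.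
  by rewrite liftK.
by apply/eqmxP; apply: adds_eqmx.
Qed.

Lemma sum_of_simples_stable S : sum_of_simples S -> stable gs S.
Proof.
move=> [k [Ws [simWs /eqmxP/stable_eqmx ->]]]; apply/allP => A hA.
by apply: stablemx_sums => i; have [_ /allP -> //] := simWs i.
Qed.

Lemma socle_exists U : exists S, is_socle gs U S.
Proof.
suff socle_above m S : (d - \rank S < m)%N -> (S <= U)%MS -> sum_of_simples S ->
    exists S', is_socle gs U S'.
  apply: (socle_above d.+1 0); rewrite ?ltnS ?leq_subr ?sub0mx //.
  exact: sum_of_simples0.
elim: m S => // m IHm S rankS SU sumS.
case: (classic (exists W, [/\ simple_sub gs W, (W <= U)%MS & ~~ (W <= S)%MS]))
  => [[W [simW WU WnS]] | noW].
  apply: (IHm (S + W)%MS); last exact: sum_of_simples_adds.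
    have /andP[_ ltSSW] : (S <= S + W)%MS && (\rank S < \rank (S + W)%MS)%N.
      by rewrite -ltmxErank ltmxE addsmxSl addsmx_sub submx_refl.
    by have := rank_leq_col (S + W)%MS; lia.
  by rewrite addsmx_sub SU.
exists S; split => //; first exact: sum_of_simples_stable.
move=> W simW WU; apply/negPn/negP => WnS.
by apply: noW; exists W.
Qed.

Lemma is_socleMr f U V S : f \in unitmx -> centralizes f ->
  (U *m f :=: V)%MS -> is_socle gs U S -> is_socle gs V (S *m f).
Proof.
move=> uf cf defV [sS SU maxS [k [Ws [simWs /eqmxP defS]]]]; split.
- exact: stableMr.
- by rewrite -defV submxMr.
- move=> W simW WV; have uf' : invmx f \in unitmx by rewrite unitmx_inv.
  have := maxS _ (simple_subMr uf' (centralizes_inv uf cf) simW).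
  rewrite -(mulmxK uf U) submxMr ?defV // => /(_ isT) WfS.
  by rewrite -(mulmxKV uf W) submxMr.
exists k, (fun i => Ws i *m f); split; first by move=> i; apply: simple_subMr.
by apply/eqmxP; apply: eqmx_trans (sumsmxMr _ _ _); apply: eqmxMr.
Qed.

Lemma mod_isoMr f S : f \in unitmx -> centralizes f -> mod_iso gs S (S *m f).
Proof.
move=> uf cf; exists f; split; first by rewrite mxrankMfree ?row_free_unit.
  by rewrite submx_refl.
by apply/allP => A hA; rewrite -!mulmxA cf.
Qed.

Lemma mx_hom_sub U f A m (X : 'M[K]_(m, d)) :
  U *m A *m f = U *m f *m A -> (X <= U)%MS -> X *m A *m f = X *m f *m A.
Proof. by move=> homU /submxP[Y ->]; rewrite -!(mulmxA Y) homU. Qed.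

Lemma mod_iso_sym U V : stable gs U -> stable gs V -> mod_iso gs U V -> mod_iso gs V U.
Proof.
move=> /allP sU /allP sV [f [rUf /eqmxP defV /allP homf]].
(* g maps each row of V to its unique f-preimage in U. *)
pose g := pinvmx (U *m f) *m U.
have gK m (X : 'M_(m, d)) : (X <= V)%MS -> X *m g *m f = X.
  by move=> XV; rewrite /g mulmxA -(mulmxA _ U f) mulmxKpV ?defV.
have VgU : (V *m g <= U)%MS by rewrite mulmxA submxMl.
have injf m (X : 'M_(m, d)) : (X <= U)%MS -> X *m f = 0 -> X = 0.
  move: rUf => /mxrank_injP/eqP UK XU /sub_kermxP Xker.
  by apply/eqP; rewrite -submx0 -UK sub_capmx XU.
have rVg : \rank (V *m g) = \rank V.
  by apply/eqP; rewrite eqn_leq mxrankM_maxl -{1}(gK _ V (submx_refl V)) mxrankM_maxl.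
exists g; split => //.
- apply/andP; split => //; have [_ <-] := mxrank_leqif_sup VgU.
  by rewrite rVg -defV rUf.
apply/allP => A hA; apply/eqP/subr0_eq/injf.
  rewrite addmx_sub ?eqmx_opp ?(submx_trans (submxMr A VgU) (sU A hA)) //.
  by rewrite /g mulmxA submxMl.
rewrite mulmxBl gK ?(submx_trans _ (sV A hA)) ?submxMr //.
by rewrite (mx_hom_sub (eqP (homf A hA)) VgU) gK ?subrr.
Qed.

Lemma mod_iso_trans U V W : mod_iso gs U V -> mod_iso gs V W -> mod_iso gs U W.
Proof.
move=> [f [rUf /eqmxP defV /allP homf]] [g [rVg /eqmxP defW /allP homg]].
have defUfg : (U *m (f *m g) :=: W)%MS.
  by rewrite mulmxA; apply: eqmx_trans (eqmxMr g defV) defW.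
exists (f *m g); split.
- by rewrite defUfg -defW -rUf defV.
- exact/eqmxP.
apply/allP => A hA; rewrite !mulmxA (eqP (homf A hA)).
by rewrite (mx_hom_sub (eqP (homg A hA))) ?defV.
Qed.

Lemma stable_simple_eq0 (X Y : 'M[K]_d) : simple_sub gs 1%:M -> stable gs X ->
  (X :&: Y = 0)%MS -> Y != 0 -> X = 0.
Proof.
move=> [_ _ min1] sX dXY; case: (min1 X sX (submx1 X)) => // fullX.
by rewrite -submx0 -dXY sub_capmx submx_refl (submx_trans (submx1 Y) fullX).
Qed.

Section Projection.
Variables P M : 'M[K]_d.
Hypotheses (sP : stable gs P) (sM : stable gs M).
Hypotheses (dPM : (P :&: M = 0)%MS) (fullPM : (1%:M <= P + M)%MS).

Lemma proj_mx_centralizes : centralizes (proj_mx P M).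
Proof.
move: sP sM => /allP sP' /allP sM' A hA.
have PpA : (proj_mx P M *m A <= P)%MS.
  by rewrite (submx_trans _ (sP' A hA)) // submxMr // -[proj_mx P M]mul1mx proj_mx_sub.
have PmA : (proj_mx M P *m A <= M)%MS.
  by rewrite (submx_trans _ (sM' A hA)) // submxMr // -[proj_mx M P]mul1mx proj_mx_sub.
have splitA : A = proj_mx P M *m A + proj_mx M P *m A.
  by rewrite -mulmxDl -[X in X = _](mul1mx A) -{1}(add_proj_mx dPM fullPM) !mul1mx.
by rewrite {1}splitA mulmxDl proj_mx_id // proj_mx_0 ?addr0.
Qed.

Lemma mod_iso_proj W : simple_sub gs P -> W != 0 -> stable gs W ->
  (W :&: M = 0)%MS -> mod_iso gs W P.
Proof.
move=> [_ _ minP] nzW sW dWM.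
have kerPM : (kermx (proj_mx P M) <= M)%MS.
  rewrite -[kermx _](add_proj_mx dPM (submx_trans (submx1 _) fullPM)).
  by rewrite mulmx_ker add0r proj_mx_sub.
have rWP : \rank (W *m proj_mx P M) = \rank W.
  by apply/mxrank_injP; rewrite -submx0 -dWM capmxS.
exists (proj_mx P M); split => //.
- have := minP _ (stableMr proj_mx_centralizes sW) (proj_mx_sub _ _ _).
  case=> [WP0 | PWP]; last by rewrite proj_mx_sub.
  by move: nzW; rewrite -mxrank_eq0 -rWP WP0 mxrank0.
by apply/allP => A hA; rewrite -mulmxA (proj_mx_centralizes hA) mulmxA.
Qed.
End Projection.
End Submodules.

Section Generators.
Variables (K : fieldType) (d : nat) (T : nat -> 'M[K]_d).

Lemma mem_genD_T m i : (1 <= i < m)%N -> T i \in genD m T.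
Proof. by move=> im; rewrite mem_cat map_f ?orbT // mem_iota; lia. Qed.

Lemma mem_genD_T010 m : (1 < m)%N -> T 0 *m T 1 *m T 0 \in genD m T.
Proof. by move=> m1; rewrite mem_cat m1 mem_head. Qed.

Lemma genD_memP m A : A \in genD m T ->
  (1 < m)%N /\ A = T 0 *m T 1 *m T 0 \/ exists2 i, (1 <= i < m)%N & A = T i.
Proof.
rewrite mem_cat => /orP[|/mapP[i]]; first by case: ifP; rewrite ?inE // => m1 /eqP; left.
by rewrite mem_iota => im ->; right; exists i => //; lia.
Qed.

Lemma genB_memP m A : A \in genB m T -> exists2 i, (i < m)%N & A = T i.
Proof. by case/mapP => i; rewrite mem_iota => im ->; exists i. Qed.

Lemma stable_genB X m : stable (genD m T) X -> stablemx X (T 0) ->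
  stable (genB m T) X.
Proof.
move=> /allP sX sX0; apply/allP => _ /genB_memP[[|i] im ->] //.
by apply: sX; apply: mem_genD_T.
Qed.
End Generators.

Section HeckeB.
Variables (K : fieldType) (q : K) (n d : nat) (T : nat -> 'M[K]_d).
Hypothesis HB : HB_rel n q T.

(* T_k ... T_1 T_0 T_1 ... T_k, i.e. the Jucys-Murphy element L_(k+1) of
   H(B_n) up to a power of q. *)
Fixpoint jm k := if k is k'.+1 then T k'.+1 *m jm k' *m T k'.+1 else T 0.

Lemma jm_commute_far k j : (k.+2 <= j)%N -> (j < n)%N -> jm k *m T j = T j *m jm k.
Proof.
case: HB => _ _ _ _ farT; elim: k => [|k IHk] kj j_lt_n /=; first by apply: farT; lia.
have cT : T k.+1 *m T j = T j *m T k.+1 by apply: farT; lia.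
rewrite -mulmxA cT mulmxA -(mulmxA (T k.+1)) IHk; [by rewrite !mulmxA cT|lia|done].
Qed.

Lemma jm_commute k j : (k < n)%N -> (j < k)%N -> jm k *m T j = T j *m jm k.
Proof.
case: HB => _ _ braid01 braid farT; elim: k => [//|k IHk] k_lt_n /=.
rewrite ltnS leq_eqVlt => /orP[/eqP -> | j_lt_k].
  case: k IHk k_lt_n => [|k] _ k_lt_n /=; first by rewrite !mulmxA braid01.
  have braidk := braid k.+1 isT k_lt_n.
  rewrite !mulmxA braidk -(mulmxA _ (T k.+2) (jm k)) -jm_commute_far // !mulmxA.
  by rewrite -!mulmxA [T k.+1 *m (T k.+2 *m T k.+1)]mulmxA braidk !mulmxA.
have cT : T k.+1 *m T j = T j *m T k.+1 by apply: farT; lia.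
rewrite -mulmxA cT mulmxA -(mulmxA (T k.+1)) IHk; [by rewrite !mulmxA cT|lia|done].
Qed.

Hypothesis n_gt0 : (0 < n)%N.

Lemma jm_centralizes : centralizes (genD n.-1 T) (jm n.-1).
Proof.
have lt_n : (n.-1 < n)%N by rewrite prednK.
move=> A /genD_memP[[n2 ->] | [i i_lt ->]]; last by rewrite jm_commute //; lia.
have c0 : jm n.-1 *m T 0 = T 0 *m jm n.-1 by rewrite jm_commute //; lia.
have c1 : jm n.-1 *m T 1 = T 1 *m jm n.-1 by rewrite jm_commute //; lia.
by rewrite -mulmxA -c0 mulmxA -(mulmxA (T 0)) -c1 mulmxA -c0 !mulmxA.
Qed.

Lemma T0_invol : T 0 *m T 0 = 1%:M.
Proof. by case: HB => T00 _ _ _ _; apply: T00. Qed.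

Lemma conjT0_genD A : A \in genD n T -> T 0 *m A *m T 0 \in genD n T.
Proof.
case: HB => _ _ _ _ farT; move=> /genD_memP[[n2 ->] | [[|[|i]] i_lt ->]] //.
- by rewrite !mulmxA T0_invol mul1mx -mulmxA T0_invol mulmx1 mem_genD_T //; lia.
- exact: mem_genD_T010.
by rewrite (farT 0%N i.+2) -?mulmxA ?T0_invol ?mulmx1 ?mem_genD_T //; lia.
Qed.

Lemma stable_conjT0 V : stable (genD n T) V -> stable (genD n T) (V *m T 0).
Proof.
move=> /allP sV; apply/allP => A /conjT0_genD/sV sVA.
have -> : V *m T 0 *m A = V *m (T 0 *m A *m T 0) *m T 0.
  by rewrite !mulmxA -(mulmxA _ (T 0) (T 0)) T0_invol mulmx1.
by rewrite submxMr.
Qed.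

Lemma simple_conjT0 V : simple_sub (genD n T) V -> simple_sub (genD n T) (V *m T 0).
Proof.
have T0K X : X *m T 0 *m T 0 = X by rewrite -mulmxA T0_invol mulmx1.
move=> [nzV sV minV]; split; [|exact: stable_conjT0|].
  by apply: contraNneq nzV => V0; rewrite -[V]T0K V0 mul0mx.
move=> X sX XV; have XT0 : (X *m T 0 <= V)%MS by rewrite -[V]T0K submxMr.
case: (minV _ (stable_conjT0 sX) XT0) => [X0 | VX]; first by left; rewrite -[X]T0K X0 mul0mx.
by right; rewrite -[X]T0K submxMr.
Qed.

Hypothesis q0 : q != 0.

Lemma T_unit i : (i < n)%N -> T i \in unitmx.
Proof.
case: HB => T00 quadT _ _ _; case: i => [|i] i_lt_n; first by case: (mulmx1_unit (T00 i_lt_n)).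
have := quadT i.+1 i_lt_n; rewrite mulmxDl mul1mx mulmxBr mul_mx_scalar addrA => quad.
apply: (proj1 (@mulmx1_unit _ _ _ (q^-1 *: (T i.+1 - q%:M + 1%:M)) _)).
rewrite -scalemxAr mulmxDr mulmxBr mul_mx_scalar mulmx1.
have -> : T i.+1 *m T i.+1 - q *: T i.+1 + T i.+1 = q%:M.
  by apply/eqP; rewrite -subr_eq0 quad.
by rewrite scale_scalar_mx mulVf.
Qed.

Lemma jm_unit k : (k < n)%N -> jm k \in unitmx.
Proof.
elim: k => [|k IHk] k_lt_n /=; first exact: T_unit.
by rewrite !unitmx_mul T_unit // IHk // ltnW.
Qed.
End HeckeB.

Section Restriction.
Variables (K : fieldType) (q : K) (n d : nat) (T : nat -> 'M[K]_d) (Dp Dm : 'M[K]_d).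
Hypotheses (q0 : q != 0) (HB : HB_rel n q T) (n_gt0 : (0 < n)%N).
Hypotheses (simB : simple_sub (genB n T) 1%:M).
Hypotheses (simP : simple_sub (genD n T) Dp) (simM : simple_sub (genD n T) Dm).
Hypotheses (dPM : (Dp :&: Dm = 0)%MS) (fullPM : (1%:M <= Dp + Dm)%MS).
Hypothesis notiso : ~ mod_iso (genD n T) Dp Dm.

Lemma conjT0_cap : (Dp *m T 0 :&: Dp = 0)%MS.
Proof.
have [_ sW minW] := simple_conjT0 HB n_gt0 simP.
have [nzP sP _] := simP; have [nzM _ _] := simM.
case: (minW _ (stable_cap sW sP) (capmxSl _ _)) => // WP.
have sPB : stable (genB n T) Dp.
  by apply: stable_genB sP _; apply: submx_trans WP (capmxSr _ _).
by move: nzP; rewrite (stable_simple_eq0 simB sPB dPM nzM) eqxx.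
Qed.

Lemma conjT0_Dp : (Dp *m T 0 <= Dm)%MS.
Proof.
have [nzW sW minW] := simple_conjT0 HB n_gt0 simP.
have [_ sP _] := simP; have [_ sM _] := simM.
case: (minW _ (stable_cap sW sM) (capmxSl _ _)) => [dWM | WM]; last first.
  exact: submx_trans WM (capmxSr _ _).
have isoWP := mod_iso_proj sP sM dPM fullPM simP nzW sW dWM.
have dMP : (Dm :&: Dp = 0)%MS by rewrite capmxC.
have fullMP : (1%:M <= Dm + Dp)%MS by rewrite addsmxC.
have isoWM := mod_iso_proj sM sP dMP fullMP simM nzW sW conjT0_cap.
by case: notiso; apply: mod_iso_trans (mod_iso_sym sW sP isoWP) isoWM.
Qed.

Lemma conjT0_Dm : (Dm *m T 0 <= Dp)%MS.
Proof.
have [nzW sW _] := simple_conjT0 HB n_gt0 simP; have [_ _ minM] := simM.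
case: (minM _ sW conjT0_Dp) => [W0 | MW]; first by rewrite W0 eqxx in nzW.
by rewrite -[Dp]mulmx1 -(T0_invol HB n_gt0) mulmxA submxMr.
Qed.

Lemma rank_Dp_Dm : \rank Dp = \rank Dm.
Proof.
have rT0 X : \rank (X *m T 0) = \rank X.
  by rewrite mxrankMfree // row_free_unit (T_unit HB q0).
by apply/eqP; rewrite eqn_leq -{1}rT0 mxrankS ?conjT0_Dp //= -rT0 mxrankS ?conjT0_Dm.
Qed.

Lemma jm_swap k : (k < n)%N -> (Dp *m jm T k <= Dm)%MS /\ (Dm *m jm T k <= Dp)%MS.
Proof.
have [_ /allP sP _] := simP; have [_ /allP sM _] := simM.
elim: k => [|k IHk] k_lt_n /=; first by split; [exact: conjT0_Dp | exact: conjT0_Dm].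
have [PM MP] := IHk (ltnW k_lt_n).
have Tk : T k.+1 \in genD n T by rewrite mem_genD_T ?k_lt_n.
rewrite !mulmxA; split.
- by apply: submx_trans (sM _ Tk); rewrite submxMr // (submx_trans _ PM) ?submxMr ?sP.
- by apply: submx_trans (sP _ Tk); rewrite submxMr // (submx_trans _ MP) ?submxMr ?sM.
Qed.

Lemma jm_Dp : (Dp *m jm T n.-1 :=: Dm)%MS.
Proof.
have lt_n : (n.-1 < n)%N by rewrite prednK.
have [PM _] := jm_swap lt_n; apply/eqmxP/andP; split => //.
by rewrite -(mxrank_leqif_sup PM).2 mxrankMfree ?row_free_unit ?(jm_unit HB q0) // rank_Dp_Dm.
Qed.
End Restriction.

Theorem theorem2p7 (K : fieldType) (q : K) (n d : nat)
    (T : nat -> 'M[K]_d) (Dp Dm : 'M[K]_d) :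
  q != 0 ->
  2%:R * \prod_(1 <= i < n) (1 + q ^+ i) != 0 ->
  HB_rel n q T ->
  (* D is a simple H(B_n)-module *)
  simple_sub (genB n T) 1%:M ->
  (* D restricted to H(D_n) is D_+ (+) D_-, with D_+, D_- simple, non-isomorphic *)
  simple_sub (genD n T) Dp ->
  simple_sub (genD n T) Dm ->
  (Dp + Dm == 1%:M)%MS -> mxdirect (Dp + Dm) ->
  ~ mod_iso (genD n T) Dp Dm ->
  exists Sp Sm : 'M[K]_d,
    [/\ is_socle (genD n.-1 T) Dp Sp, is_socle (genD n.-1 T) Dm Sm &
        mod_iso (genD n.-1 T) Sp Sm].
Proof.
(* The condition on 2 * prod (1 + q^i) only serves to make D split over
   H(D_n), which is assumed here. *)
move=> q0 _ HB simB simP simM /andP[_ fullPM] /mxdirect_addsP dPM notiso.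
have [n0 | n_gt0] := posnP n.
  (* H(B_0) = K, so D is one-dimensional and cannot split. *)
  have [nzP _ _] := simP; have [nzM _ _] := simM.
  have sPB : stable (genB n T) Dp by rewrite n0.
  by move: nzP; rewrite (stable_simple_eq0 simB sPB dPM nzM) eqxx.
have uL : jm T n.-1 \in unitmx by rewrite (jm_unit HB q0) ?prednK.
have cL := jm_centralizes HB n_gt0.
have [Sp socP] := socle_exists (genD n.-1 T) Dp.
exists Sp, (Sp *m jm T n.-1); split => //; last exact: mod_isoMr.
exact: is_socleMr uL cL (jm_Dp q0 HB n_gt0 simB simP simM dPM fullPM notiso) socP.
Qed.
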